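(* Let $\hat q$ be an $n\times n$ and $\hat p$ an $m\times m$ parametric matrix, let $M$ be an $n\times m$ $(\hat q,\hat p)$-Manin matrix over $\mathfrak R$, and let $N$ be an $m\times s$ matrix over $\mathfrak R$ such that every entry $N_{ij}$ commutes with every entry $M_{kl}$. Let $I=(i_1<\dots<i_r)$ be an increasing multi-index with entries in $\{1,\dots,n\}$ and $K=(k_1,\dots,k_r)$ a multi-index with entries in $\{1,\dots,s\}$. If $r\le m$, then $$\mathrm{cdet}_{\hat q}((MN)_{IK})=\sum_J\mathrm{cdet}_{\hat q}(M_{IJ})\,\mathrm{cdet}_{\hat p}(N_{JK}),$$ the sum over all increasing multi-indices $J=(j_1<\dots<j_r)$ with entries in $\{1,\dots,m\}$; if $r>m$, then $\mathrm{cdet}_{\hat q}((MN)_{IK})=0$. In particular, if $m=n=s$, then $\mathrm{cdet}_{\hat q}(MN)=\mathrm{cdet}_{\hat q}(M)\,\mathrm{cdet}_{\hat p}(N)$.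
   Context: $\mathfrak R$ is an associative unital algebra over $\mathbb C$. A parametric $n\times n$ matrix is a matrix $\hat q=(q_{ij})$ of nonzero complex numbers with $q_{ij}q_{ji}=1$, $q_{ii}=1$. An $n\times m$ matrix $M$ over $\mathfrak R$ is a $(\hat q,\hat p)$-Manin matrix if $M_{ik}M_{jk}=q_{ji}M_{jk}M_{ik}$ for $i<j$ and all $k$, and $M_{ik}M_{jl}-q_{ji}p_{kl}M_{jl}M_{ik}+p_{kl}M_{il}M_{jk}-q_{ji}M_{jk}M_{il}=0$ for $i<j$, $k<l$. For increasing $I=(i_1<\dots<i_r)$ and $\sigma\in S_r$, $\varepsilon(\hat q,I,\sigma)=\prod_{s<t,\ \sigma(s)>\sigma(t)}(-q_{i_{\sigma(s)}i_{\sigma(t)}})$. For any matrix $X$, increasing $I$ and any multi-index $J=(j_1,\dots,j_r)$, $\mathrm{cdet}_{\hat q}(X_{IJ})=\sum_{\sigma\in S_r}\varepsilon(\hat q,I,\sigma)X_{i_{\sigma(1)},j_1}\cdots X_{i_{\sigma(r)},j_r}$; $\mathrm{cdet}_{\hat q}(X)$ is the case $I=J=(1,\dots,n)$. *)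

From HB Require Import structures.
From mathcomp Require Import all_boot all_order all_algebra all_fingroup.
From mathcomp Require Import complex.
From mathcomp Require Import Rstruct.
Set Implicit Arguments.
Unset Strict Implicit.
Unset Printing Implicit Defensive.
Import Order.TTheory GRing.Theory Num.Theory.
Local Open Scope ring_scope.

Definition CC : fieldType := complex Rdefinitions.R.

Definition parametric (n : nat) (q : 'M[CC]_n) : Prop :=
  [/\ forall i j, q i j != 0,
      forall i j, q i j * q j i = 1 &
      forall i, q i i = 1].

(* (q,p)-Manin matrix (indices are 0-based). *)
Definition manin (A : algType CC) (n m : nat) (q : 'M[CC]_n) (p : 'M[CC]_m)
  (M : 'M[A]_(n, m)) : Prop :=
  (forall (i j : 'I_n) (k : 'I_m), (i < j)%N ->
     M i k * M j k = q j i *: (M j k * M i k)) /\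
  (forall (i j : 'I_n) (k l : 'I_m), (i < j)%N -> (k < l)%N ->
     M i k * M j l - (q j i * p k l) *: (M j l * M i k)
     + p k l *: (M i l * M j k) - q j i *: (M j k * M i l) = 0).

Definition increasing (r n : nat) (I : 'I_r -> 'I_n) : bool :=
  [forall a : 'I_r, forall b : 'I_r, (a < b)%N ==> (I a < I b)%N].

Definition eps (n r : nat) (q : 'M[CC]_n) (I : 'I_r -> 'I_n) (sigma : 'S_r) : CC :=
  \prod_(s < r) \prod_(t < r | (s < t)%N && (sigma t < sigma s)%N)
     (- q (I (sigma s)) (I (sigma t))).

Definition cdet (A : algType CC) (n k r : nat) (q : 'M[CC]_n) (X : 'M[A]_(n, k))
  (I : 'I_r -> 'I_n) (J : 'I_r -> 'I_k) : A :=
  \sum_(sigma : 'S_r) eps q I sigma *: \prod_(l < r) X (I (sigma l)) (J l).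

(* Expanding the entries of M *m N, and using that the entries of N commute
   with those of M, writes cdet_q((MN)_{IK}) as the sum over all column maps L
   of cdet_q(M_{IL}) times the ordered product of the N_{L(l), k_l}.  Pairing
   each row permutation s with (a a+1) s, the Manin relations say that
   exchanging two adjacent columns multiplies cdet_q(M_{IL}) by -p, and that
   two equal adjacent columns make it vanish.  Hence
   cdet_q(M_{I, J o t}) = eps(p, J, t) cdet_q(M_{IJ}) for every permutation t,
   the terms with non-injective L vanish, and writing each injective L
   uniquely as J o t with J increasing regroups the sum over t into
   cdet_p(N_{JK}). *)

From HB Require Import structures.
From mathcomp Require Import all_boot all_order all_algebra all_fingroup zify.
Import Order.TTheory GRing.Theory Num.Theory.
Set Implicit Arguments.
Unset Strict Implicit.
Unset Printing Implicit Defensive.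

Section IncreasingMaps.
Variables r m : nat.
Implicit Types (f g J : 'I_r -> 'I_m) (t : 'S_r) (a b x y : 'I_r).

Lemma increasing_ltn f x y : increasing f -> (x < y)%N -> (f x < f y)%N.
Proof. by move=> /forallP/(_ x)/forallP/(_ y)/implyP; apply. Qed.

Lemma ltn_increasing f x y : increasing f -> (f x < f y)%N = (x < y)%N.
Proof.
move=> f_incr; case: (ltngtP x y) => [lt_xy|lt_yx|/val_inj->]; last by rewrite ltnn.
  exact: increasing_ltn.
by apply/negbTE; rewrite -leqNgt ltnW // increasing_ltn.
Qed.

Lemma increasing_inj f : increasing f -> injective f.
Proof.
move=> f_incr x y e; apply/eqP; rewrite -(inj_eq (@ord_inj r)) eqn_leq.
rewrite leqNgt (leqNgt y) -(ltn_increasing y x f_incr) -(ltn_increasing x y f_incr).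
by rewrite e ltnn.
Qed.

Lemma increasing_adjacent f :
  (forall a b : 'I_r, b = a.+1 :> nat -> (f a < f b)%N) -> increasing f.
Proof.
move=> f_adj; suff f_chain d x y : y = x + d.+1 :> nat -> (f x < f y)%N.
  apply/forallP => x; apply/forallP => y; apply/implyP => lt_xy.
  by apply: (f_chain (y - x).-1); lia.
elim: d y => [|d IHd] y def_y; first by apply: f_adj; rewrite def_y addn1.
have lt_z : (x + d.+1 < r)%N by have := ltn_ord y; lia.
have := IHd (Ordinal lt_z) erefl; have := f_adj (Ordinal lt_z) y; rewrite /=; lia.
Qed.

Lemma card_ltn_ord (x : 'I_r) : #|[set y : 'I_r | (y < x)%N]| = x.
Proof.
rewrite -sum1_card (eq_bigl (fun y : 'I_r => (y < x)%N)) => [|y]; last by rewrite inE.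
by rewrite (big_ord_narrow (ltnW (ltn_ord x))) sum1_card card_ord.
Qed.

Definition rank_of f (a : 'I_r) : nat := #|[set b | (f b < f a)%N]|.

Lemma eq_rank_of f g : f =1 g -> rank_of f =1 rank_of g.
Proof. by move=> fg a; apply: eq_card => b; rewrite !inE !fg. Qed.

Lemma rank_of_lt f a : (rank_of f a < r)%N.
Proof.
rewrite -[X in (_ < X)%N]card_ord -cardsT; apply: proper_card; rewrite properT.
by apply/eqP => /setP/(_ a); rewrite !inE ltnn.
Qed.

Lemma rank_of_ltn f a b : (f a < f b)%N -> (rank_of f a < rank_of f b)%N.
Proof.
move=> lt_ab; apply: proper_card; apply/properP; split.
  by apply/subsetP => c; rewrite !inE => /ltn_trans; apply.
by exists a; rewrite !inE ?lt_ab ?ltnn.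
Qed.

Lemma rank_of_comp f t a : increasing f -> rank_of (f \o t) a = t a.
Proof.
move=> f_incr; rewrite /rank_of.
rewrite (eq_card (B := t @^-1: [set y : 'I_r | (y < t a)%N])) => [|b]; last first.
  by rewrite !inE /= ltn_increasing.
by rewrite card_preimset ?card_ltn_ord //; apply: perm_inj.
Qed.

Lemma injective_factor_increasing (L : 'I_r -> 'I_m) : injective L ->
  exists2 J : {ffun 'I_r -> 'I_m}, increasing J & exists t, L =1 J \o t.
Proof.
move=> L_inj.
have rank_inj : injective (fun a => Ordinal (rank_of_lt L a)).
  move=> a b /(congr1 val) /= e; apply/L_inj/val_inj.
  by case: (ltngtP (L a) (L b)) => [/rank_of_ltn|/rank_of_ltn|//]; rewrite e ltnn.
pose t := perm rank_inj.
have rank_t x : rank_of L (t^-1%g x) = x.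
  by rewrite -[in RHS](permKV t x) [in RHS]permE.
exists [ffun x => L (t^-1%g x)]; last by exists t; move=> a; rewrite /= ffunE permK.
apply/forallP => x; apply/forallP => y; apply/implyP => lt_xy; rewrite !ffunE.
case: ltngtP => // [/rank_of_ltn|/val_inj/L_inj/(congr1 t)]; rewrite ?permKV.
  by rewrite !rank_t ltnNge ltnW.
by move=> /val_eqP; rewrite (ltn_eqF lt_xy).
Qed.

Lemma increasing_comp_perm_inj J (J' : 'I_r -> 'I_m) t (t' : 'S_r) :
  increasing J -> increasing J' -> J \o t =1 J' \o t' -> J =1 J' /\ t = t'.
Proof.
move=> J_incr J'_incr e.
have t_eq : t = t'.
  apply/permP => a; apply: ord_inj.
  by rewrite -(rank_of_comp t a J_incr) -(rank_of_comp t' a J'_incr) (eq_rank_of e).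
by split=> // x; have := e (t^-1%g x); rewrite /= -t_eq permKV.
Qed.

End IncreasingMaps.

Lemma increasing_id r : increasing (@id 'I_r).
Proof. by apply/forallP => a; apply/forallP => b; apply/implyP. Qed.

Lemma increasing_ord_id r (J : 'I_r -> 'I_r) : increasing J -> J =1 id.
Proof.
(* Both sides equal rank_of J x. *)
move=> J_incr x; have J_inj := increasing_inj J_incr; apply: ord_inj.
rewrite -[in LHS](permE J_inj) -(rank_of_comp _ x (increasing_id r)).
rewrite -[in RHS](perm1 x) -(rank_of_comp _ x J_incr).
by apply: eq_rank_of => y; rewrite /= perm1 permE.
Qed.

Lemma increasing_cast_ord n m (e : n = m) (J : 'I_n -> 'I_m) :
  increasing J -> J =1 cast_ord e.
Proof. by case: m / e J => J /increasing_ord_id J_id x; rewrite J_id cast_ord_id. Qed.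

Section AdjacentTranspositions.
Variable r : nat.
Implicit Types (t : 'S_r) (a b l x y : 'I_r).

Lemma ltn_tperm_adjacent a b x y : b = a.+1 :> nat ->
  ~~ ((x == a) && (y == b)) -> ~~ ((x == b) && (y == a)) ->
  (tperm a b x < tperm a b y)%N = (x < y)%N.
Proof.
move=> def_b; rewrite -!(inj_eq (@ord_inj r)) def_b.
by case: tpermP => [->|->|/eqP+/eqP]; case: tpermP => [->|->|/eqP+/eqP];
  rewrite -?(inj_eq (@ord_inj r)) ?def_b; lia.
Qed.

Lemma tperm_adjacent_out a b l : b = a.+1 :> nat ->
  (l < a)%N || (b < l)%N -> tperm a b l = l.
Proof. by move=> def_b l_out; rewrite tpermD // -(inj_eq (@ord_inj r)) ?def_b; lia. Qed.

(* Swapping an adjacent descent of t lowers this weight by the size of the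
   descent, so repeated swaps sort t in finitely many steps. *)
Definition perm_weight t : nat := \sum_(l < r) l * (r - t l).

Lemma perm_weight_tperm t a b : b = a.+1 :> nat -> (t b < t a)%N ->
  (perm_weight (tperm a b * t) < perm_weight t)%N.
Proof.
move=> def_b lt_tba.
have neq_ab : a != b by rewrite -(inj_eq (@ord_inj r)) def_b neq_ltn ltnSn.
have split_ab (F : 'I_r -> nat) :
    \sum_l F l = F a + F b + \sum_(l | (l != a) && (l != b)) F l.
  by rewrite (bigD1 a) //= (bigD1 b) 1?eq_sym //= addnA.
rewrite /perm_weight 2!split_ab !permM tpermL tpermR.
rewrite (eq_bigr (fun l : 'I_r => l * (r - t l))%N) => [|l /andP[l_a l_b]]; last first.
  by rewrite permM tpermD // eq_sym.
have := ltn_ord (t a); rewrite def_b; set S := (\sum_(_ < _ | _) _)%N; nia.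
Qed.

Lemma perm_ascending_eq1 t :
  (forall a b, b = a.+1 :> nat -> (t a < t b)%N) -> t = 1%g.
Proof.
move=> t_asc; apply/permP => x; rewrite perm1.
by apply: increasing_ord_id; apply: increasing_adjacent.
Qed.

End AdjacentTranspositions.

Local Open Scope ring_scope.

Lemma sum_injective_ffun (V : nmodType) r m (F : {ffun 'I_r -> 'I_m} -> V) :
  \sum_(L : {ffun 'I_r -> 'I_m} | injectiveb L) F L =
  \sum_(J : {ffun 'I_r -> 'I_m} | increasing J) \sum_(t : 'S_r) F [ffun l => J (t l)].
Proof.
pose comp (Jt : {ffun 'I_r -> 'I_m} * 'S_r) : {ffun 'I_r -> 'I_m} :=
  [ffun l => Jt.1 (Jt.2 l)].
pose D := [pred Jt : {ffun 'I_r -> 'I_m} * 'S_r | increasing Jt.1].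
have comp_inj : {in D &, injective comp}.
  move=> [J t] [J' t'] J_incr J'_incr /ffunP e.
  have [eJ <-] : J =1 J' /\ t = t'.
    by apply: increasing_comp_perm_inj J_incr J'_incr _ => a; have := e a; rewrite !ffunE.
  by congr (_, _); apply/ffunP.
have im_comp (L : {ffun 'I_r -> 'I_m}) : injectiveb L = (L \in comp @: D).
  apply/injectiveP/imsetP => [L_inj | [[J t] J_incr ->] ].
    have [J J_incr [t Lt]] := injective_factor_increasing L_inj.
    by exists (J, t) => //; apply/ffunP => a; rewrite ffunE Lt.
  by move=> x y; rewrite !ffunE => /(increasing_inj J_incr); apply: perm_inj.
rewrite (eq_bigl _ _ im_comp) big_imset // pair_big.
by apply: eq_bigl => -[J t]; rewrite andbT.
Qed.

Lemma prod_adjacent (R : pzSemiRingType) r (G : 'I_r -> R) (a b : 'I_r) :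
  b = a.+1 :> nat ->
  \prod_(l < r) G l =
  (\prod_(l < r | (l < a)%N) G l) * (G a * G b) * \prod_(l < r | (b < l)%N) G l.
Proof.
move=> def_b; pose F i := G (insubd a i).
have G_nat (P : pred nat) :
    \prod_(l < r | P l) G l = \prod_(0 <= i < r | P i) F i.
  by rewrite big_mkord; apply: eq_bigr => l _; rewrite /F valKd.
have lt_br : (a.+1 < r)%N by rewrite -def_b ltn_ord.
have -> : \prod_(l < r | (b < l)%N) G l = \prod_(a.+2 <= i < r) F i.
  rewrite G_nat (big_cat_nat _ (n := a.+2)) //= big_nat_cond big_pred0 ?mul1r => [|i].
    rewrite big_nat_cond [RHS]big_nat_cond; apply: eq_bigl => i.
    by rewrite andbT; apply: andb_idr => /andP[le_i _]; rewrite def_b.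
  by rewrite def_b; lia.
rewrite (G_nat xpredT) (G_nat (fun i => i < a)%N).
rewrite (big_cat_nat _ (n := a)) ?(ltnW (ltn_ord a)) //=.
rewrite (big_ltn (ltnW lt_br)) (big_ltn lt_br) {2}/F valKd {2}/F -def_b valKd !mulrA.
by rewrite (big_nat_widen _ _ _ _ _ (ltnW (ltn_ord a))).
Qed.

Lemma sum_perm_pairs (V : nmodType) r (f : 'S_r -> V) (a b : 'I_r) : a != b ->
  \sum_(s : 'S_r) f s = \sum_(s : 'S_r | (s a < s b)%N) (f s + f (tperm a b * s)%g).
Proof.
move=> neq_ab; rewrite (bigID (fun s : 'S_r => (s a < s b)%N)) /= big_split /=.
congr (_ + _); rewrite (reindex_inj (mulgI (tperm a b))) /=.
apply: eq_bigl => s; rewrite !permM tpermL tpermR.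
have : s a != s b by rewrite (inj_eq perm_inj).
by rewrite -(inj_eq (@ord_inj r)); case: ltngtP.
Qed.

Section Sign.
Variables (n : nat) (q : 'M[CC]_n).

Lemma eps1 r (I : 'I_r -> 'I_n) : eps q I 1 = 1.
Proof.
rewrite /eps big1 // => s _; rewrite big_pred0 // => t.
by rewrite !perm1; case: ltngtP.
Qed.

Lemma eps_tperm_adjacent r (I : 'I_r -> 'I_n) (s : 'S_r) (a b : 'I_r) :
  b = a.+1 :> nat -> (s a < s b)%N ->
  eps q I (tperm a b * s) = - q (I (s b)) (I (s a)) * eps q I s.
Proof.
move=> def_b lt_sab; rewrite /eps !pair_big_dep /=.
have tperm2_inj : injective (fun x : 'I_r * 'I_r => (tperm a b x.1, tperm a b x.2)).
  by move=> [x1 x2] [y1 y2] [/perm_inj -> /perm_inj ->].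
rewrite [in RHS](@reindex_inj CC *%R 1 _ _ _ _ tperm2_inj) /=.
rewrite (@bigD1 CC *%R 1 _ (a, b)) /=; last first.
  by rewrite !permM tpermL tpermR def_b ltnSn.
rewrite !permM tpermL tpermR; f_equal.
apply: eq_big => [[x y]|[x y] _] /=; last by rewrite !permM.
rewrite !permM.
have [/andP[/eqP-> /eqP->]|not_ab] := boolP ((x == a) && (y == b)).
  by rewrite eqxx andbF tpermL tpermR def_b ltnNge leqnSn.
have [/andP[/eqP-> /eqP->]|not_ba] := boolP ((x == b) && (y == a)).
  by rewrite tpermL tpermR def_b ltnNge leqnSn (ltnNge (s b)) (ltnW lt_sab) !andbF.
by rewrite (ltn_tperm_adjacent def_b not_ab not_ba) xpair_eqE not_ab andbT.
Qed.

Lemma eps_neq0 r (I : 'I_r -> 'I_n) (s : 'S_r) : parametric q -> eps q I s != 0.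
Proof.
move=> [q_neq0 _ _].
by apply/prodf_neq0 => u _; apply/prodf_neq0 => v _; rewrite oppr_eq0 q_neq0.
Qed.

End Sign.

Section ColumnDeterminant.
Variables (A : algType CC) (n k : nat) (q : 'M[CC]_n) (X : 'M[A]_(n, k)).

Lemma eq_cdet r (I I' : 'I_r -> 'I_n) (J J' : 'I_r -> 'I_k) :
  I =1 I' -> J =1 J' -> cdet q X I J = cdet q X I' J'.
Proof.
move=> eI eJ; apply: eq_bigr => s _; congr (_ *: _).
  by apply: eq_bigr => i _; apply: eq_bigr => j _; rewrite !eI.
by apply: eq_bigr => l _; rewrite eI eJ.
Qed.

Lemma cdet_adjacent_pairs r (I : 'I_r -> 'I_n) (L : 'I_r -> 'I_k) (a b : 'I_r) :
  b = a.+1 :> nat ->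
  cdet q X I L = \sum_(s : 'S_r | (s a < s b)%N) eps q I s *:
    ((\prod_(l < r | (l < a)%N) X (I (s l)) (L l)) *
     (X (I (s a)) (L a) * X (I (s b)) (L b)
        - q (I (s b)) (I (s a)) *: (X (I (s b)) (L a) * X (I (s a)) (L b))) *
     \prod_(l < r | (b < l)%N) X (I (s l)) (L l)).
Proof.
move=> def_b; have neq_ab : a != b by rewrite -(inj_eq (@ord_inj r)) def_b neq_ltn ltnSn.
rewrite /cdet (sum_perm_pairs _ neq_ab); apply: eq_bigr => s lt_sab.
have fix_out (P : pred 'I_r) : (forall l, P l -> (l < a)%N || (b < l)%N) ->
    \prod_(l < r | P l) X (I ((tperm a b * s)%g l)) (L l) =
    \prod_(l < r | P l) X (I (s l)) (L l).
  by move=> P_out; apply: eq_bigr => l /P_out l_out; rewrite permM tperm_adjacent_out.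
rewrite !(prod_adjacent _ def_b) !fix_out => [|l ->|l ->]; rewrite ?orbT //.
rewrite eps_tperm_adjacent // !permM tpermL tpermR.
rewrite mulrBr mulrBl scalerBr -scalerAr -scalerAl scalerA mulNr scaleNr.
by rewrite [_ * eps _ _ _]mulrC.
Qed.

End ColumnDeterminant.

Section ManinColumns.
Variables (A : algType CC) (n m : nat) (q : 'M[CC]_n) (p : 'M[CC]_m).
Variable M : 'M[A]_(n, m).
Hypotheses (p_par : parametric p) (M_manin : manin q p M).

Lemma manin_swap_cols (i j : 'I_n) (k l : 'I_m) : (i < j)%N ->
  M i l * M j k - q j i *: (M j l * M i k) =
  - p l k *: (M i k * M j l - q j i *: (M j k * M i l)).
Proof.
move=> lt_ij; have [_ p_inv _] := p_par; have [M_col M_rel] := M_manin.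
have manin_pair (k' l' : 'I_m) : (k' < l')%N ->
    (M i k' * M j l' - q j i *: (M j k' * M i l'))
    + p k' l' *: (M i l' * M j k' - q j i *: (M j l' * M i k')) = 0.
  move=> lt_kl; rewrite -[RHS](M_rel i j k' l' lt_ij lt_kl).
  rewrite scalerBr scalerA [p _ _ * _]mulrC addrA addrAC [RHS]addrAC.
  by congr (_ + _); rewrite addrAC.
case: (ltngtP k l) => [lt_kl|lt_lk|/ord_inj<-].
- move/eqP: (manin_pair k l lt_kl); rewrite addr_eq0 => /eqP->.
  by rewrite scaleNr scalerN opprK scalerA p_inv scale1r.
- by move/eqP: (manin_pair l k lt_lk); rewrite addr_eq0 => /eqP->; rewrite scaleNr.
- by rewrite (M_col i j k lt_ij) !subrr scaler0.
Qed.

Lemma cdet_adjacent_eq0 r (I : 'I_r -> 'I_n) (L : 'I_r -> 'I_m) (a b : 'I_r) :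
  increasing I -> b = a.+1 :> nat -> L a = L b -> cdet q M I L = 0.
Proof.
move=> I_incr def_b eL; rewrite (cdet_adjacent_pairs q M I L def_b) big1 // => s lt_sab.
by rewrite eL (M_manin.1 _ _ _ (increasing_ltn I_incr lt_sab)) subrr mulr0 mul0r scaler0.
Qed.

Lemma cdet_tperm_adjacent r (I : 'I_r -> 'I_n) (L : 'I_r -> 'I_m) (a b : 'I_r) :
  increasing I -> b = a.+1 :> nat ->
  cdet q M I (L \o tperm a b) = - p (L b) (L a) *: cdet q M I L.
Proof.
move=> I_incr def_b; rewrite !(cdet_adjacent_pairs q M I _ def_b) scaler_sumr.
apply: eq_bigr => s lt_sab /=.
have fix_out (P : pred 'I_r) : (forall l, P l -> (l < a)%N || (b < l)%N) ->
    \prod_(l < r | P l) M (I (s l)) (L (tperm a b l)) =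
    \prod_(l < r | P l) M (I (s l)) (L l).
  by move=> P_out; apply: eq_bigr => l /P_out l_out; rewrite tperm_adjacent_out.
rewrite !fix_out => [|l ->|l ->]; rewrite ?orbT // tpermL tpermR.
rewrite (manin_swap_cols _ _ (increasing_ltn I_incr lt_sab)).
by rewrite -scalerAr -scalerAl !scalerA mulrC.
Qed.

Lemma cdet_perm_cols r (I : 'I_r -> 'I_n) (L : 'I_r -> 'I_m) (t : 'S_r) :
  increasing I -> cdet q M I (L \o t) = eps p L t *: cdet q M I L.
Proof.
move=> I_incr; have [w] := ubnP (perm_weight t); elim: w t => // w IHw t lt_tw.
have [/existsP[a /existsP[b /andP[/eqP def_b lt_tba]]] | t_asc] :=
  boolP [exists a : 'I_r, exists b : 'I_r, (b == a.+1 :> nat) && (t b < t a)%N].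
  pose t' := (tperm a b * t)%g; have def_t : t = (tperm a b * t')%g by rewrite tpermKg.
  have lt_t'ab : (t' a < t' b)%N by rewrite !permM tpermL tpermR.
  have IHt' := IHw t' (leq_trans (perm_weight_tperm def_b lt_tba) lt_tw).
  rewrite (@eq_cdet _ _ _ q M _ I I _ ((L \o t') \o tperm a b)) // => [|l]; last first.
    by rewrite /= !permM tpermK.
  rewrite cdet_tperm_adjacent // IHt' scalerA [in RHS]def_t eps_tperm_adjacent //.
have -> : t = 1%g.
  apply: perm_ascending_eq1 => a b def_b.
  move/existsPn: t_asc => /(_ a)/existsPn/(_ b); rewrite def_b eqxx /= -leqNgt.
  rewrite leq_eqVlt => /orP[/eqP/ord_inj/perm_inj eab|//].
  by move: def_b; rewrite eab; lia.
by rewrite eps1 scale1r; apply: eq_cdet => // l; rewrite /= perm1.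
Qed.

Lemma cdet_noninjective_eq0 r (I : 'I_r -> 'I_n) (L : 'I_r -> 'I_m) :
  increasing I -> ~~ injectiveb L -> cdet q M I L = 0.
Proof.
move=> I_incr /injectivePn[x [y neq_xy eLxy]].
wlog lt_xy : x y neq_xy eLxy / (x < y)%N.
  move=> gen; case: (ltngtP x y) => [|lt_yx|/ord_inj exy]; first exact: gen.
    by apply: (gen y x); rewrite // eq_sym.
  by rewrite exy eqxx in neq_xy.
have lt_x1r : (x.+1 < r)%N by have := ltn_ord y; lia.
pose c := Ordinal lt_x1r; pose t := tperm c y.
have eLt : (L \o t) x = (L \o t) c.
  by rewrite /= tpermL tpermD // -(inj_eq (@ord_inj r)) /=; lia.
have := cdet_adjacent_eq0 (a := x) (b := c) I_incr erefl eLt.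
rewrite cdet_perm_cols // => /eqP; rewrite scaler_eq0 (negbTE (eps_neq0 _ _ p_par)).
by move/eqP.
Qed.

End ManinColumns.

Section CauchyBinet.
Variables (A : algType CC) (n m s : nat) (q : 'M[CC]_n) (p : 'M[CC]_m).
Variables (M : 'M[A]_(n, m)) (N : 'M[A]_(m, s)).
Hypothesis NM_comm :
  forall (i : 'I_m) (j : 'I_s) (k : 'I_n) (l : 'I_m), N i j * M k l = M k l * N i j.

Lemma cdet_mulmx_expand r (I : 'I_r -> 'I_n) (K : 'I_r -> 'I_s) :
  cdet q (M *m N) I K =
  \sum_(L : {ffun 'I_r -> 'I_m}) cdet q M I L * \prod_(l < r) N (L l) (K l).
Proof.
have expand_row (sg : 'S_r) : \prod_(l < r) (M *m N) (I (sg l)) (K l) =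
    \sum_(L : {ffun 'I_r -> 'I_m})
      (\prod_(l < r) M (I (sg l)) (L l)) * \prod_(l < r) N (L l) (K l).
  under eq_bigr do rewrite mxE.
  rewrite bigA_distr_bigA /=; apply: eq_bigr => L _.
  by apply: prodrM_comm => i j _ _; rewrite /GRing.comm NM_comm.
rewrite /cdet; under eq_bigr do rewrite expand_row scaler_sumr.
rewrite exchange_big /=; apply: eq_bigr => L _; rewrite mulr_suml.
by apply: eq_bigr => sg _; rewrite scalerAl.
Qed.

Hypotheses (p_par : parametric p) (M_manin : manin q p M).

Lemma cdet_mulmx r (I : 'I_r -> 'I_n) (K : 'I_r -> 'I_s) : increasing I ->
  cdet q (M *m N) I K =
  \sum_(J : {ffun 'I_r -> 'I_m} | increasing J) cdet q M I J * cdet p N J K.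
Proof.
move=> I_incr; rewrite cdet_mulmx_expand (bigID (fun L : {ffun _} => injectiveb L)) /=.
rewrite [X in _ + X]big1 ?addr0 => [|L /(cdet_noninjective_eq0 p_par M_manin I_incr)->];
  last by rewrite mul0r.
rewrite sum_injective_ffun; apply: eq_bigr => J J_incr.
rewrite [cdet p N J K]/cdet mulr_sumr; apply: eq_bigr => t _.
rewrite (@eq_cdet _ _ _ q M _ I I _ (J \o t)) // => [|l]; last by rewrite ffunE.
rewrite (cdet_perm_cols p_par M_manin) // -scalerAl -scalerAr; congr (_ *: (_ * _)).
by apply: eq_bigr => l _; rewrite ffunE.
Qed.

End CauchyBinet.

Theorem mainTheorem5 (A : algType CC) (n m s : nat)
  (q : 'M[CC]_n) (p : 'M[CC]_m) (M : 'M[A]_(n, m)) (N : 'M[A]_(m, s)) :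
  parametric q -> parametric p -> manin q p M ->
  (forall (i : 'I_m) (j : 'I_s) (k : 'I_n) (l : 'I_m), N i j * M k l = M k l * N i j) ->
  (forall (r : nat) (I : 'I_r -> 'I_n) (K : 'I_r -> 'I_s), increasing I ->
     ((r <= m)%N ->
        cdet q (M *m N) I K =
        \sum_(J : {ffun 'I_r -> 'I_m} | increasing J) cdet q M I J * cdet p N J K) /\
     ((m < r)%N -> cdet q (M *m N) I K = 0)) /\
  (forall (em : n = m) (es : n = s),
     cdet q (M *m N) id (cast_ord es) =
     cdet q M id (cast_ord em) * cdet p N (cast_ord em) (cast_ord es)).
Proof.
(* Only p needs to be parametric. *)
move=> _ p_par M_manin NM_comm.
have cdet_MN := cdet_mulmx NM_comm p_par M_manin.
split=> [r I K I_incr | em es].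
  rewrite cdet_MN //; split=> // lt_mr; apply: big_pred0 => J.
  by apply/negP => /increasing_inj/leq_card; rewrite !card_ord leqNgt lt_mr.
rewrite cdet_MN ?increasing_id // (big_pred1 [ffun l => cast_ord em l]) => [|J];
  last first.
  apply/idP/eqP => [/increasing_cast_ord J_cast | ->].
    by apply/ffunP => l; rewrite ffunE J_cast.
  by apply/forallP => a; apply/forallP => b; apply/implyP; rewrite !ffunE.
by congr (_ * _); apply: eq_cdet => // l; rewrite ffunE.
Qed.
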